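(* Let $\mathfrak{P}=(V,E,L_{\mathcal{A}},L_{\mathcal{C}})$ be a well-formed proof tree whose root $v_1$ satisfies $L_{\mathcal{A}}(v_1)=\langle\mathcal{P},\mathcal{S}\rangle$. Then $\iota_{\langle\mathcal{P},\mathcal{S}\rangle}\sqsubseteq\max\{L_{\mathcal{C}}(v)\mid v\in V\}$.
   Context: Annotated dependency pairs (ADPs): over a finite signature $\Sigma$ with defined symbols $\mathcal{D}$ and fresh annotated copies $f^\sharp$ ($f\in\mathcal{D}$), an ADP is $\ell\to\{p_1:r_1,\dots,p_k:r_k\}^m$ with $\ell$ a non-variable unannotated term, $r_j$ possibly annotated terms with $\mathcal{V}(r_j)\subseteq\mathcal{V}(\ell)$, $0<p_j\le1$, $\sum p_j=1$, and flag $m\in\{\mathsf{true},\mathsf{false}\}$. Defined symbols of a set $\mathcal{P}$ of ADPs are the roots of left-hand sides, constructors are the other symbols, a basic term is $f(t_1,\dots,t_k)$ with $f$ defined and $t_i$ constructor terms, $|t|$ is term size, $t^\sharp$ annotates the root. Rewriting with $\mathcal{P}$ (innermost): $s$ rewrites to $\{p_j:t_j\}$ using an ADP $\ell\to\{p_j:r_j\}^m$, a position $\pi$ with a defined or annotated symbol, and $\sigma$ with $\flat(s|_\pi)=\ell\sigma$ ($\flat$ removes annotations) whose proper subterms are normal forms; $t_j=s[r_j\sigma]_\pi$ (at: $m=\mathsf{true}$, $\pi$ annotated), $t_j=s[\flat(r_j)\sigma]_\pi$ (nt: $m=\mathsf{true}$, $\pi$ not annotated), $t_j=\flat^\uparrow_\pi(s[r_j\sigma]_\pi)$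 (af), $t_j=\flat^\uparrow_\pi(s[\flat(r_j)\sigma]_\pi)$ (nf), where $\flat^\uparrow_\pi$ removes annotations strictly above $\pi$. A $\mathcal{P}$-chain tree is a possibly infinite finitely-branching tree of nodes labeled $(p_v:t_v)$, root probability $1$, with $t_v$ rewriting to $\{\tfrac{p_w}{p_v}:t_w\}_{w\text{ child}}$ at each inner node. For $\mathcal{S}\subseteq\mathcal{P}$, $\operatorname{edl}_{\langle\mathcal{P},\mathcal{S}\rangle}(\mathfrak{T})$ sums $p_v$ over inner nodes rewritten by (at)/(af)-steps with ADPs from $\mathcal{S}$; $\operatorname{edh}_{\langle\mathcal{P},\mathcal{S}\rangle}(t)$ is its supremum over chain trees with root term $t^\sharp$ ($t$ basic); $\operatorname{eirc}_{\langle\mathcal{P},\mathcal{S}\rangle}(n)=\sup\{\operatorname{edh}_{\langle\mathcal{P},\mathcal{S}\rangle}(t)\mid t\text{ basic},|t|\le n\}$; $\iota_{\langle\mathcal{P},\mathcal{S}\rangle}=\iota(\operatorname{eirc}_{\langle\mathcal{P},\mathcal{S}\rangle})$. Complexities $\mathfrak{C}=\{\mathrm{Pol}_0,\mathrm{Pol}_1,\dots,\mathrm{Exp},\mathrm{2\text{-}Exp},\mathrm{Fin},\omega\}$ totally ordered by $\mathrm{Pol}_0\sqsubset\mathrm{Pol}_1\sqsubset\dots\sqsubset\mathrm{Exp}\sqsubset\mathrm{2\text{-}Exp}\sqsubset\mathrm{Fin}\sqsubset\omega$; $\oplus$ is the maximum; $\iota(f)=\mathrm{Pol}_a$ for the least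 $a$ with $f\in O(n^a)$, else $\mathrm{Exp}$ if $f\in O(2^{\mathrm{pol}(n)})$, else $\mathrm{2\text{-}Exp}$ if $f\in O(2^{2^{\mathrm{pol}(n)}})$, else $\mathrm{Fin}$ if $f$ never takes value $\omega$, else $\omega$. An ADP problem is a pair $\langle\mathcal{P},\mathcal{S}\rangle$ of a finite set $\mathcal{P}$ of ADPs and $\mathcal{S}\subseteq\mathcal{P}$; it is solved if $\mathcal{S}=\emptyset$. A processor maps an ADP problem to a pair $(c,\{\langle\mathcal{P}_1,\mathcal{S}_1\rangle,\dots,\langle\mathcal{P}_n,\mathcal{S}_n\rangle\})$ with $c\in\mathfrak{C}$. A proof tree is a finite tree $(V,E,L_{\mathcal{A}},L_{\mathcal{C}})$ with $L_{\mathcal{A}}$ labeling nodes by ADP problems and $L_{\mathcal{C}}$ labeling nodes by complexities, such that for each inner node $v$ with children $w_1,\dots,w_n$ some processor maps $L_{\mathcal{A}}(v)$ to $(L_{\mathcal{C}}(v),\{L_{\mathcal{A}}(w_1),\dots,L_{\mathcal{A}}(w_n)\})$, and each leaf $v$ has $L_{\mathcal{C}}(v)=\mathrm{Pol}_0$ if $L_{\mathcal{A}}(v)$ is solved and $\omega$ otherwise. It is well formed if for every node $v$ with $L_{\mathcal{A}}(v)=\langle\mathcal{P},\mathcal{S}\rangle$ and root-path $v_1,\dots,v_k=v$: $\iota_{\langle\mathcal{P},\mathcal{S}\rangle}\sqsubseteq L_{\mathcal{C}}(v_1)\oplus\dots\oplus L_{\mathcal{C}}(v_{k-1})\oplus\max\{L'_{\mathcal{C}}(w)\mid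 w$ reachable from $v$ (including $v$)$\}$ and $\iota_{\langle\mathcal{P},\mathcal{P}\setminus\mathcal{S}\rangle}\sqsubseteq L_{\mathcal{C}}(v_1)\oplus\dots\oplus L_{\mathcal{C}}(v_{k-1})$, where $L'_{\mathcal{C}}(w)=L_{\mathcal{C}}(w)$ for inner nodes, $L'_{\mathcal{C}}(w)=\iota_{L_{\mathcal{A}}(w)}$ for leaves, and an empty $\oplus$ is $\mathrm{Pol}_0$. *)

From HB Require Import structures.
From mathcomp Require Import all_boot all_order all_algebra.
From mathcomp Require Import all_classical all_reals.
From mathcomp Require Import ereal esum exp.
From mathcomp Require Import Rstruct.
From Stdlib Require Import Rdefinitions.
From Stdlib Require List.
Notation In := List.In.

Set Implicit Arguments.
Unset Strict Implicit.
Unset Printing Implicit Defensive.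
Import Order.TTheory GRing.Theory Num.Theory.
Local Open Scope ring_scope.
Local Open Scope classical_set_scope.

Notation R := Rdefinitions.R.

Section ADP.
Variable F : finType.
Variable ar : F -> nat.
Variable Dsig : pred F.            (* defined symbols D of Sigma (those that have annotated copies) *)

(* Terms over Sigma plus annotated copies: Fn f b ts is f^# (ts) if b, else f (ts).
   Variables are indexed by nat. *)
Inductive term := Var of nat | Fn of F & bool & seq term.

Fixpoint tsize (t : term) : nat :=
  match t with Var _ => 1 | Fn _ _ ts => (sumn (map tsize ts)).+1 end.

Fixpoint flat (t : term) : term :=
  match t with Var x => Var x | Fn f _ ts => Fn f false (map flat ts) end.

Fixpoint tsubst (s : nat -> term) (t : term) : term :=
  match t with Var x => s x | Fn f b ts => Fn f b (map (tsubst s) ts) end.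

Fixpoint tvars (t : term) : seq nat :=
  match t with Var x => [:: x] | Fn _ _ ts => flatten (map tvars ts) end.

Fixpoint wf_term (t : term) : bool :=
  match t with Var _ => true | Fn f _ ts => (size ts == ar f) && all wf_term ts end.

Fixpoint ann_ok (t : term) : bool :=
  match t with Var _ => true | Fn f b ts => (b ==> Dsig f) && all ann_ok ts end.

(* positions are sequences of (0-based) argument indices *)
Fixpoint subt (t : term) (p : seq nat) : option term :=
  match p with
  | [::] => Some t
  | i :: p' => match t with
               | Var _ => None
               | Fn _ _ ts => match onth ts i with Some u => subt u p' | None => None end
               end
  end.

(* s[u]_p (used only at valid positions) *)
Fixpoint repl (t : term) (p : seq nat) (u : term) : term :=
  match p with
  | [::] => u
  | i :: p' => match t with
               | Var _ => t
               | Fn f b ts => Fn f b (set_nth (Var 0) ts i (repl (nth (Var 0) ts i) p' u))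
               end
  end.

Fixpoint unmark_above (t : term) (p : seq nat) : term :=
  match p with
  | [::] => t
  | i :: p' => match t with
               | Var _ => t
               | Fn f _ ts => Fn f false
                   (set_nth (Var 0) ts i (unmark_above (nth (Var 0) ts i) p'))
               end
  end.

Definition annot_at (t : term) (p : seq nat) : bool :=
  if subt t p is Some (Fn _ b _) then b else false.

Definition mark_root (t : term) : term :=
  match t with Var x => Var x | Fn f _ ts => Fn f true ts end.

(* Annotated dependency pairs  l -> {p1:r1, ..., pk:rk}^m *)
Record adp := ADP { lhs : term; rhs : seq (R * term); mflag : bool }.

Definition adp_valid (a : adp) : Prop :=
  [/\ wf_term (lhs a), (exists f b ts, lhs a = Fn f b ts), flat (lhs a) = lhs a,
      (forall pr, In pr (rhs a) ->
         [/\ 0 < pr.1 <= 1, wf_term pr.2, ann_ok pr.2 & {subset tvars pr.2 <= tvars (lhs a)}])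
    & \sum_(pr <- rhs a) pr.1 = 1].

Definition adps := adp -> Prop.

Definition root_sym (t : term) : option F :=
  if t is Fn f _ _ then Some f else None.

Definition defined (P : adps) (f : F) : Prop :=
  exists a, P a /\ root_sym (lhs a) = Some f.

Definition nf (P : adps) (t : term) : Prop :=
  forall pos u, subt t pos = Some u ->
    forall a (sigma : nat -> term), P a -> flat u <> tsubst sigma (lhs a).

Definition rstep (P : adps) (s : term) (a : adp) (pos : seq nat) (sigma : nat -> term)
    (res : seq (R * term)) : Prop :=
  P a /\
  exists u, [/\ subt s pos = Some u,
     (annot_at s pos \/ exists f b us, u = Fn f b us /\ defined P f),
     flat u = tsubst sigma (lhs a),
     (forall pos' v, pos' <> [::] -> subt (flat u) pos' = Some v -> nf P v) &
     res = map (fun pr =>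
        let r := if annot_at s pos then pr.2 else flat pr.2 in
        let core := repl s pos (tsubst sigma r) in
        (pr.1, if mflag a then core else unmark_above core pos)) (rhs a)].

(* Chain trees: nodes are addresses (seq nat); children of v are rcons v i for i < ct_nch v. *)
Record chain_tree := CT {
  ct_dom : seq nat -> Prop;
  ct_p : seq nat -> R;
  ct_t : seq nat -> term;
  ct_nch : seq nat -> nat;
  ct_adp : seq nat -> adp;
  ct_pos : seq nat -> seq nat;
  ct_sub : seq nat -> nat -> term }.

Definition is_chain_tree (P : adps) (T : chain_tree) : Prop :=
  [/\ ct_dom T [::], ct_p T [::] = 1,
      (forall v i, ct_dom T (rcons v i) <-> ct_dom T v /\ (i < ct_nch T v)%nat) &
      (forall v, ct_dom T v -> (0 < ct_nch T v)%nat ->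
         exists res, [/\ rstep P (ct_t T v) (ct_adp T v) (ct_pos T v) (ct_sub T v) res,
            size res = ct_nch T v &
            forall i, (i < ct_nch T v)%nat ->
              ct_p T (rcons v i) / ct_p T v = (nth (0, Var 0) res i).1 /\
              ct_t T (rcons v i) = (nth (0, Var 0) res i).2])].

(* edl_<P,S>(T): sum of p_v over inner nodes rewritten by (at)/(af) steps, i.e. at an
   annotated position, with an ADP from S *)
Definition edl (S : adps) (T : chain_tree) : \bar R :=
  (\esum_(v in [set v | [/\ ct_dom T v, (0 < ct_nch T v)%nat, S (ct_adp T v) &
                          annot_at (ct_t T v) (ct_pos T v)]]) (ct_p T v)%:E)%E.

Definition edh (P S : adps) (t : term) : \bar R :=
  ereal_sup [set edl S T | T in [set T | is_chain_tree P T /\ ct_t T [::] = mark_root t]].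

Definition constructor_term (P : adps) (u : term) : Prop :=
  forall pos f b us, subt u pos = Some (Fn f b us) -> b = false /\ ~ defined P f.

Definition basic (P : adps) (t : term) : Prop :=
  wf_term t /\ exists f ts, [/\ t = Fn f false ts, defined P f &
                                 forall u, In u ts -> constructor_term P u].

Definition eirc (P S : adps) (n : nat) : \bar R :=
  ereal_sup [set edh P S t | t in [set t | basic P t /\ (tsize t <= n)%nat]].

End ADP.

Inductive cplx := Pol of nat | Exp | TwoExp | Fin | Omega.

Definition crank (c : cplx) : nat * nat :=
  match c with Pol a => (0, a) | Exp => (1, 0) | TwoExp => (2, 0)
             | Fin => (3, 0) | Omega => (4, 0) end.

Definition cle (c d : cplx) : bool :=
  ((crank c).1 < (crank d).1)%nat || (((crank c).1 == (crank d).1) && ((crank c).2 <= (crank d).2)%nat).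

Definition cmax (c d : cplx) : cplx := if cle c d then d else c.

Definition bigO (f : nat -> \bar R) (g : nat -> R) : Prop :=
  exists (c : R) (N : nat), forall n, (N <= n)%nat -> (f n <= (c * g n)%:E)%E.

Definition isPol (f : nat -> \bar R) (a : nat) : bool := `[< bigO f (fun n => n%:R ^+ a) >].

Definition iota (f : nat -> \bar R) : cplx :=
  match pselect (exists a, isPol f a) with
  | left H => Pol (ex_minn H)
  | right _ =>
    if `[< exists p : {poly R}, bigO f (fun n => 2 `^ p.[n%:R]) >] then Exp
    else if `[< exists p : {poly R}, bigO f (fun n => 2 `^ (2 `^ p.[n%:R])) >] then TwoExp
    else if `[< forall n, f n <> +oo%E >] then Fin
    else Omega
  end.

Definition problem (F : finType) := (seq (adp F) * seq (adp F))%type.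

Definition iota_PS (F : finType) (ar : F -> nat) (A : problem F) : cplx :=
  iota (eirc ar (fun a : adp F => In a A.1) (fun a => In a A.2)).

Definition iota_PminusS (F : finType) (ar : F -> nat) (A : problem F) : cplx :=
  iota (eirc ar (fun a : adp F => In a A.1) (fun a => In a A.1 /\ ~ In a A.2)).

Definition valid_problem (F : finType) (ar : F -> nat) (Dsig : pred F) (A : problem F) : Prop :=
  (forall a, In a A.1 -> adp_valid ar Dsig a) /\ (forall a, In a A.2 -> In a A.1).

Definition solved (F : finType) (A : problem F) : bool := nilp A.2.

Definition processor (F : finType) := problem F -> cplx * seq (problem F).

Inductive ptree (F : finType) := PNode of problem F & cplx & seq (ptree F).

Definition pt_prob (F : finType) (t : ptree F) : problem F := let: PNode A _ _ := t in A.
Definition pt_cplx (F : finType) (t : ptree F) : cplx := let: PNode _ c _ := t in c.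

Fixpoint is_proof_tree (F : finType) (ar : F -> nat) (Dsig : pred F) (t : ptree F) : Prop :=
  let: PNode A c ch := t in
  valid_problem ar Dsig A /\
  match ch with
  | [::] => c = (if solved A then Pol 0 else Omega)
  | _ :: _ => (exists proc : processor F, proc A = (c, map (@pt_prob F) ch)) /\
              foldr (fun u acc => is_proof_tree ar Dsig u /\ acc) True ch
  end.

Fixpoint maxL (F : finType) (t : ptree F) : cplx :=
  let: PNode _ c ch := t in foldr cmax c (map (@maxL F) ch).

Fixpoint maxLp (F : finType) (ar : F -> nat) (t : ptree F) : cplx :=
  let: PNode A c ch := t in
  match ch with
  | [::] => iota_PS ar A
  | _ :: _ => foldr cmax c (map (@maxLp F ar) ch)
  end.

(* well-formedness; anc = L_C(v_1) (+) ... (+) L_C(v_{k-1}) for the root path *)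
Fixpoint wf_at (F : finType) (ar : F -> nat) (anc : cplx) (t : ptree F) : bool :=
  let: PNode A c ch := t in
  [&& cle (iota_PS ar A) (cmax anc (maxLp ar t)), cle (iota_PminusS ar A) anc
    & all (@wf_at F ar (cmax anc c)) ch].

Definition well_formed (F : finType) (ar : F -> nat) (t : ptree F) : bool := wf_at ar (Pol 0) t.

(* Well-formedness at the root bounds the complexity of the root problem by the
   maximum of L'_C over the tree.  L'_C differs from L_C only at leaves: a solved
   leaf has an empty S, so no rewrite step is ever counted and its complexity is
   Pol_0 = L_C; an unsolved leaf is labelled omega, the top complexity.  Hence
   max L'_C is below max L_C. *)

From Pilot Require Import Defs.
From mathcomp Require Import all_boot all_order all_algebra.
From mathcomp Require Import all_classical all_reals ereal esum Rstruct.

Import Order.TTheory GRing.Theory Num.Theory.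

Lemma cle_refl c : cle c c.
Proof. by rewrite /cle eqxx leqnn orbT. Qed.

Lemma cle_trans a b c : cle a b -> cle b c -> cle a c.
Proof.
rewrite /cle; case: (crank a) (crank b) (crank c) => [x1 y1] [x2 y2] [x3 y3] /=.
case/orP => [lt12|/andP[/eqP-> le12]]; case/orP => [lt23|/andP[/eqP<- le23]].
- by rewrite (ltn_trans lt12 lt23).
- by rewrite lt12.
- by rewrite lt23.
- by rewrite eqxx (leq_trans le12 le23) orbT.
Qed.

Lemma cle_total a b : cle a b || cle b a.
Proof.
rewrite /cle; case: (crank a) (crank b) => [x1 y1] [x2 y2] /=.
by case: ltngtP => //= _; exact: leq_total.
Qed.

Lemma cle_pol0 c : cle (Pol 0) c.
Proof. by case: c. Qed.

Lemma cle_omega c : cle c Omega.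
Proof. by case: c. Qed.

Lemma cmax_pol0 c : cmax (Pol 0) c = c.
Proof. by rewrite /cmax cle_pol0. Qed.

Lemma cle_maxl a b : cle a (cmax a b).
Proof. by rewrite /cmax; case: ifP => // _; exact: cle_refl. Qed.

Lemma cle_maxr a b : cle b (cmax a b).
Proof.
rewrite /cmax; case: ifP => [_|nab]; first exact: cle_refl.
by move: (cle_total a b); rewrite nab.
Qed.

Lemma cle_max_lub a b c : cle a c -> cle b c -> cle (cmax a b) c.
Proof. by rewrite /cmax; case: ifP. Qed.

Lemma cle_max2 a b a' b' : cle a a' -> cle b b' -> cle (cmax a b) (cmax a' b').
Proof.
move=> aa' bb'; apply: cle_max_lub.
- exact: cle_trans aa' (cle_maxl _ _).
- exact: cle_trans bb' (cle_maxr _ _).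
Qed.

Lemma cle_foldr_cmax (T : Type) (f g : T -> cplx) c s :
  (forall x, In x s -> cle (f x) (g x)) ->
  cle (foldr cmax c (map f s)) (foldr cmax c (map g s)).
Proof.
elim: s => [_|x s IHs fg] /=; first exact: cle_refl.
by apply: cle_max2; [apply: fg; left | apply: IHs => y sy; apply: fg; right].
Qed.

Lemma iota_le0 (f : nat -> \bar R) : (forall n, (f n <= 0)%E) -> Defs.iota f = Pol 0.
Proof.
move=> f_le0; have pol0 : isPol f 0.
  by apply/asboolP; exists 0%R, 0%N => n _; rewrite mul0r.
rewrite /Defs.iota; case: pselect => [ex|[]]; last by exists 0%N.
by case: ex_minnP => m _ /(_ 0%N pol0); rewrite leqn0 => /eqP->.
Qed.

Section EmptyS.
Variables (F : finType) (ar : F -> nat) (P S : adps F).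
Hypothesis S_empty : forall a, ~ S a.

Lemma edl_pred0 (T : chain_tree F) : edl S T = 0%E.
Proof.
rewrite /edl; set A := (X in esum X _).
have -> : A = set0 by apply/seteqP; split => v // [_ _ /S_empty].
exact: esum_set0.
Qed.

Lemma edh_pred0_le0 (t : term F) : (edh P S t <= 0)%E.
Proof. by apply: ge_ereal_sup => _ [T _ <-]; rewrite edl_pred0. Qed.

Lemma eirc_pred0_le0 n : (eirc ar P S n <= 0)%E.
Proof. by apply: ge_ereal_sup => _ [t _ <-]; exact: edh_pred0_le0. Qed.

End EmptyS.

Lemma iota_PS_solved {F : finType} (ar : F -> nat) (A : problem F) :
  solved A -> iota_PS ar A = Pol 0.
Proof.
case: A => P [|a S] // _; apply: iota_le0 => n.
by apply: eirc_pred0_le0 => a [].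
Qed.

(* [ptree] is nested through [seq], so its generated induction principle has no
   hypothesis for the children. *)
Fixpoint ptree_ind_Forall (F : finType) (Q : ptree F -> Prop)
    (IH : forall A c ch, List.Forall Q ch -> Q (PNode A c ch)) (t : ptree F) : Q t :=
  let: PNode A c ch := t in
  IH A c ch ((fix Forall_ch (s : seq (ptree F)) : List.Forall Q s :=
                match s with
                | [::] => List.Forall_nil Q
                | u :: s' => List.Forall_cons u (ptree_ind_Forall F Q IH u) (Forall_ch s')
                end) ch).

Lemma foldr_and_In (T : Type) (Q : T -> Prop) (s : seq T) :
  foldr (fun u acc => Q u /\ acc) True s -> forall u, In u s -> Q u.
Proof. by elim: s => //= x s IHs [Qx Qs] u [<-|su]; last exact: IHs. Qed.

Lemma maxLp_le_maxL {F : finType} {ar : F -> nat} {Dsig : pred F} {t : ptree F} :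
  is_proof_tree ar Dsig t -> cle (maxLp ar t) (maxL t).
Proof.
elim/ptree_ind_Forall: t => A c [|u ch] IHch [_].
  move=> /= ->; case: ifP => [/(iota_PS_solved ar)->|_]; [exact: cle_refl | exact: cle_omega].
move=> [_ ch_pt]; apply: cle_foldr_cmax => w chw.
by apply: (proj1 (List.Forall_forall _ _) IHch w chw); exact: foldr_and_In ch_pt w chw.
Qed.

Lemma well_formed_root {F : finType} {ar : F -> nat} {T : ptree F} :
  well_formed ar T -> cle (iota_PS ar (pt_prob T)) (maxLp ar T).
Proof. by case: T => A c ch /and3P[]; rewrite /= cmax_pol0. Qed.

Theorem mainTheorem2 (F : finType) (ar : F -> nat) (Dsig : pred F) (T : ptree F)
    (P S : seq (adp F)) :
  is_proof_tree ar Dsig T -> well_formed ar T -> pt_prob T = (P, S) ->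
  cle (iota_PS ar (P, S)) (maxL T).
Proof.
move=> T_pt T_wf <-.
exact: cle_trans (well_formed_root T_wf) (maxLp_le_maxL T_pt).
Qed.
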